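(* Let $n\ge 3$, let $G_1$ be the star graph on $n$ nodes with Laplacian $Q_1$, and let $G_1^c$ be its complement, with Laplacian $nI-J-Q_1$ ($J$ the $n\times n$ all-one matrix). For $p\ge0$ let $$Q(p)=\begin{bmatrix} Q_1+npI & -pJ\\ -pJ & nI-J-Q_1+npI\end{bmatrix},$$ with eigenvalues $0=\mu_N(p)\le\mu_{N-1}(p)\le\mu_{N-2}(p)\le\dots\le\mu_1(p)$, $N=2n$. Then for every $p>0$ the eigenvalue $2np$ of $Q(p)$ is not the second smallest eigenvalue, i.e. $\mu_{N-1}(p)\neq 2np$ (so no structural transition of the algebraic connectivity exists); moreover, $\mu_{N-2}(p)=2np$ if and only if $0<p\le \frac1n$, i.e. the transition of the third smallest eigenvalue occurs at $p^*_{N-2}=\frac1n$.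
   Context: $2np$ is an eigenvalue of $Q(p)$ with eigenvector $[u^T,-u^T]^T$, $u$ the all-one vector. $Q(p)$ is the Laplacian of the star coupled to its (disconnected) complement by an $n$-to-$n$ interconnection of weight $p$. *)

From mathcomp Require Import all_boot all_order all_algebra.
Set Implicit Arguments. Unset Strict Implicit. Unset Printing Implicit Defensive.
Import Order.TTheory GRing.Theory Num.Theory.
Local Open Scope ring_scope.

Definition laplacian (R : pzRingType) (m : nat) (A : 'M[R]_m) : 'M[R]_m :=
  \matrix_(i, j) ((if i == j then \sum_(k < m) A i k else 0) - A i j).

Definition star_adj (R : pzRingType) (n : nat) : 'M[R]_n :=
  \matrix_(i, j) (if (val i == 0%N) != (val j == 0%N) then 1 else 0).

Definition Q1 (R : pzRingType) (n : nat) : 'M[R]_n := laplacian (star_adj R n).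

Definition Jmx (R : pzRingType) (n : nat) : 'M[R]_n := const_mx 1.

Definition Qp (R : pzRingType) (n : nat) (p : R) : 'M[R]_(n + n) :=
  block_mx (Q1 R n + (n%:R * p)%:M) (- (p *: Jmx R n))
           (- (p *: Jmx R n)) ((n%:R)%:M - Jmx R n - Q1 R n + (n%:R * p)%:M).

(* s is the list of eigenvalues (with algebraic multiplicity) of the square
   matrix M, listed in nondecreasing order: s = [mu_N; mu_{N-1}; ...; mu_1]. *)
Definition asc_eigenvalues (R : realFieldType) (m : nat) (M : 'M[R]_m)
    (s : seq R) : Prop :=
  [/\ size s = m, sorted <=%R s & char_poly M = \prod_(x <- s) ('X - x%:P)].

From mathcomp Require Import all_boot all_order all_algebra.
From mathcomp Require Import ring lra.
Set Implicit Arguments. Unset Strict Implicit. Unset Printing Implicit Defensive.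
Import Order.TTheory GRing.Theory Num.Theory.
Local Open Scope ring_scope.

(* Write u for the all-one vector and e for the indicator of the star centre.
   Q_1 and J act as scalars on the orthogonal complement of span(e, u), so
   Q(p) is diag((1 + np) I, (n - 1 + np) I) plus a perturbation of rank four
   supported on span(e, u) in each half.  Sylvester's determinant identity
   turns char_poly Q(p) into a 4 x 4 determinant, and the spectrum is
   0, np, 2np, n + np, then 1 + np and n - 1 + np, each n - 2 times.  Hence
   mu_{N-1} = np < 2np, while mu_{N-2} = min(2np, 1 + np) equals 2np exactly
   when np <= 1. *)

Lemma sorted_perm_cat d (T : orderType d) (s u v : seq T) :
  sorted <=%O s -> perm_eq s (u ++ v) -> sorted <=%O u -> allrel <=%O u v ->
  s = u ++ sort <=%O v.
Proof.
move=> s_sorted s_uv u_sorted le_uv; apply: (sorted_eq le_trans le_anti) => //.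
  rewrite (sorted_pairwise le_trans) pairwise_cat -!(sorted_pairwise le_trans).
  rewrite u_sorted (sort_sorted le_total).
  by rewrite (eq_allrel_memr _ _ (mem_sort _ v)) le_uv.
by rewrite (permPl s_uv) perm_cat2l perm_sym perm_sort.
Qed.

Lemma allrel_le_pivot d (T : porderType d) (u v : seq T) (b : T) :
  all (<= b)%O u -> all (>= b)%O v -> allrel <=%O u v.
Proof.
move=> /allP le_ub /allP ge_lb; apply/allrelP => x y xu yv.
exact: le_trans (le_ub x xu) (ge_lb y yv).
Qed.

Lemma prodr_nseq (R : comPzRingType) (I : Type) (F : I -> R) k (x : I) :
  \prod_(i <- nseq k x) F i = F x ^+ k.
Proof. by elim: k => [|k IHk]; rewrite ?big_nil // big_cons IHk exprS. Qed.

Section Determinants.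
Variable T : comPzRingType.

Lemma det_block_mx_scalar m1 m2 (A : 'M[T]_m1) (B : 'M_(m1, m2))
    (C : 'M_(m2, m1)) (d : T) :
  \det (block_mx A B C d%:M) * d ^+ m1 = \det (d *: A - B *m C) * d ^+ m2.
Proof.
have reduce : block_mx A B C d%:M *m block_mx d%:M 0 (- C) 1%:M
              = block_mx (d *: A - B *m C) B 0 d%:M.
  rewrite mulmx_block !mulmx0 !mulmx1 !add0r !mulmxN !mul_mx_scalar.
  by rewrite mul_scalar_mx subrr.
have := congr1 determinant reduce.
by rewrite det_mulmx det_lblock det_ublock det1 !det_scalar mulr1.
Qed.

(* Sylvester's identity det (1 - U V) = det (1 - V U), twisted by the
   intertwining relation Dx U = U D. *)
Lemma det_sub_mulmx_intertwined m k (Dx : 'M[T]_m) (U : 'M_(m, k))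
    (V : 'M_(k, m)) (D : 'M_k) :
  Dx *m U = U *m D ->
  \det (Dx - U *m V) * \det D = \det Dx * \det (D - V *m U).
Proof.
move=> DxU.
have left_factor : block_mx 1%:M U 0 1%:M *m block_mx (Dx - U *m V) 0 V 1%:M
                   = block_mx Dx U V 1%:M.
  by rewrite mulmx_block ?mul1mx ?mul0mx ?mulmx1 ?mulmx0 ?add0r ?addr0 subrK.
have right_factor : block_mx Dx U V 1%:M *m block_mx 1%:M (- U) 0 D
                    = block_mx Dx 0 V (D - V *m U).
  by rewrite mulmx_block ?mulmx1 ?mulmx0 ?mul1mx ?mul0mx ?addr0 ?mulmxN DxU
             addNr addrC.
have := congr1 determinant right_factor.
rewrite det_mulmx det_lblock det_ublock det1 mul1r -left_factor det_mulmx.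
by rewrite det_ublock det_lblock !det1 !mul1r mulr1.
Qed.

End Determinants.

Section TwoByTwo.
Variable T : comPzRingType.

Definition mx2 (a b c d : T) : 'M[T]_2 :=
  \matrix_(i < 2, j < 2) if val i == 0%N then (if val j == 0%N then a else b)
                         else (if val j == 0%N then c else d).

Lemma det_mx2 a b c d : \det (mx2 a b c d) = a * d - b * c.
Proof.
rewrite (expand_det_row _ ord0) !big_ord_recl big_ord0 /cofactor !det_mx11.
by rewrite !mxE /= expr0 expr1; ring.
Qed.

Lemma mul_mx2 a b c d a' b' c' d' :
  mx2 a b c d *m mx2 a' b' c' d' =
  mx2 (a * a' + b * c') (a * b' + b * d') (c * a' + d * c') (c * b' + d * d').
Proof.
apply/matrixP => i j; rewrite !mxE !big_ord_recl big_ord0 !mxE /=.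
by case: (val i == 0%N); case: (val j == 0%N); rewrite addr0.
Qed.

Lemma add_mx2 a b c d a' b' c' d' :
  mx2 a b c d + mx2 a' b' c' d' = mx2 (a + a') (b + b') (c + c') (d + d').
Proof.
by apply/matrixP => i j; rewrite !mxE; case: (val i == 0%N); case: (val j == 0%N).
Qed.

Lemma opp_mx2 a b c d : - mx2 a b c d = mx2 (- a) (- b) (- c) (- d).
Proof.
by apply/matrixP => i j; rewrite !mxE; case: (val i == 0%N); case: (val j == 0%N).
Qed.

Lemma scale_mx2 k a b c d : k *: mx2 a b c d = mx2 (k * a) (k * b) (k * c) (k * d).
Proof.
by apply/matrixP => i j; rewrite !mxE; case: (val i == 0%N); case: (val j == 0%N).
Qed.

Lemma scalar_mx2 a : a%:M = mx2 a 0 0 a.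
Proof.
apply/matrixP => i j; rewrite !mxE.
by case: i => -[|[|//]] ?; case: j => -[|[|//]] ?.
Qed.

End TwoByTwo.

Lemma map_mx2 (T S : comPzRingType) (f : {rmorphism T -> S}) a b c d :
  map_mx f (mx2 a b c d) = mx2 (f a) (f b) (f c) (f d).
Proof.
by apply/matrixP => i j; rewrite !mxE; case: (val i == 0%N); case: (val j == 0%N).
Qed.

Section StarDecomposition.
Variables (T : comPzRingType) (n : nat).
Local Notation N := n.+1.

Definition is_centre (i : 'I_N) : T := (val i == 0%N)%:R.

Definition star_frame : 'M[T]_(N, 2) :=
  \matrix_(i, k) if val k == 0%N then is_centre i else 1.

Lemma star_frame_formE a b c d :
  star_frame *m mx2 a b c d *m star_frame^T =
  \matrix_(i, j) (a * is_centre i * is_centre j + b * is_centre i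
                  + c * is_centre j + d).
Proof.
apply/matrixP => i j; rewrite !mxE !big_ord_recl !big_ord0 !mxE.
rewrite !big_ord_recl !big_ord0 !mxE /=; ring.
Qed.

Lemma star_frame_gram : star_frame^T *m star_frame = mx2 1 1 1 N%:R.
Proof.
have leaf (i : 'I_n) : is_centre (lift ord0 i) = 0 by [].
apply/matrixP => k l; rewrite !mxE big_ord_recl !mxE /=.
under eq_bigr => i _ do rewrite !mxE /= leaf.
case: k => -[|[|//]] ?; case: l => -[|[|//]] ? /=;
  rewrite ?mulr1 ?mul1r ?mul0r ?mulr0; last by rewrite sumr_const card_ord -mulrS.
all: by rewrite big1 ?addr0.
Qed.

Lemma row_sum_star_adj (i : 'I_N) :
  \sum_(k < N) star_adj T N i k = if val i == 0%N then n%:R else 1.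
Proof.
rewrite big_ord_recl mxE /=.
under eq_bigr => k _ do rewrite mxE /= eqbF_neg negbK.
case: (val i == 0%N) => /=; first by rewrite sumr_const card_ord add0r.
by rewrite big1 // addr0.
Qed.

Lemma Q1_decomp :
  Q1 T N = 1%:M + star_frame *m mx2 N%:R (-1) (-1) 0 *m star_frame^T.
Proof.
apply/matrixP => i j; rewrite star_frame_formE /Q1 /laplacian !mxE.
rewrite row_sum_star_adj /is_centre.
have [<-|neq_ij] := eqVneq i j.
  by rewrite eqxx /=; case: (val i == 0%N) => /=; ring.
rewrite /= mulr0n.
case i0: (val i == 0%N); case j0: (val j == 0%N) => /=; try ring.
by rewrite (ord_inj (etrans (eqP i0) (esym (eqP j0)))) eqxx in neq_ij.
Qed.

Lemma Jmx_decomp : Jmx T N = star_frame *m mx2 0 0 0 1 *m star_frame^T.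
Proof. by apply/matrixP => i j; rewrite star_frame_formE !mxE; ring. Qed.

End StarDecomposition.

Section QpDecomposition.
Variables (T : comPzRingType) (n : nat).
Local Notation N := n.+1.

Definition Qp_frame : 'M[T]_(N + N, 2 + 2) :=
  block_mx (star_frame T n) 0 0 (star_frame T n).

Definition Qp_core (p : T) : 'M[T]_(2 + 2) :=
  block_mx (mx2 N%:R (-1) (-1) 0) (mx2 0 0 0 (- p))
           (mx2 0 0 0 (- p)) (mx2 (- N%:R) 1 1 (-1)).

Lemma Qp_decomp p :
  @Qp T N p = block_mx (1 + N%:R * p)%:M 0 0 (N%:R - 1 + N%:R * p)%:M
             + Qp_frame *m Qp_core p *m Qp_frame^T.
Proof.
rewrite /Qp /Qp_frame /Qp_core tr_block_mx !trmx0 !mulmx_block.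
rewrite !(mulmx0, mul0mx, addr0, add0r) add_block_mx !(addr0, add0r).
rewrite Q1_decomp Jmx_decomp.
by congr block_mx; apply/matrixP => i j; rewrite !star_frame_formE !mxE; ring.
Qed.

Lemma Qp_core_frame_gram p :
  Qp_core p *m (Qp_frame^T *m Qp_frame) =
  block_mx (mx2 (N%:R - 1) 0 (-1) (-1)) (mx2 0 0 (- p) (- (N%:R * p)))
           (mx2 0 0 (- p) (- (N%:R * p))) (mx2 (1 - N%:R) 0 0 (1 - N%:R)).
Proof.
rewrite /Qp_frame /Qp_core tr_block_mx !trmx0 mulmx_block.
rewrite !(mulmx0, mul0mx, addr0, add0r) star_frame_gram mulmx_block.
rewrite !(mulmx0, mul0mx, addr0, add0r) !mul_mx2.
by congr block_mx; apply/matrixP => i j; rewrite !mxE;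
  case: (val i == 0%N); case: (val j == 0%N); ring.
Qed.

End QpDecomposition.

Section CharPoly.
Variables (R : fieldType) (n : nat) (p : R).
Local Notation N := n.+2.
Local Notation a := (N%:R * p).
Local Notation frame := (map_mx polyC (Qp_frame R n.+1)).
Local Notation core := (map_mx polyC (Qp_core n.+1 p)).

Lemma char_poly_mx_Qp_decomp :
  char_poly_mx (@Qp R N p) =
  block_mx ('X - (1 + a)%:P)%:M 0 0 ('X - (N%:R - 1 + a)%:P)%:M
  - frame *m core *m frame^T.
Proof.
rewrite /char_poly_mx Qp_decomp map_mxD !map_mxM map_block_mx !map_scalar_mx.
rewrite !map_mx0 -map_trmx (scalar_mx_block N N) opprD addrA; congr (_ - _).
by rewrite opp_block_mx add_block_mx !oppr0 !addr0 -!raddfB.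
Qed.

Lemma Qp_compression :
  block_mx ('X - (1 + a)%:P)%:M 0 0 ('X - (N%:R - 1 + a)%:P)%:M
  - core *m frame^T *m frame =
  block_mx (mx2 ('X - (N%:R + a)%:P) 0 1 ('X - a%:P)) (mx2 0 0 p%:P a%:P)
           (mx2 0 0 p%:P a%:P) ('X - a%:P)%:M.
Proof.
rewrite -mulmxA map_trmx -!map_mxM Qp_core_frame_gram map_block_mx.
rewrite opp_block_mx add_block_mx !map_mx2 !opp_mx2 !scalar_mx2 !add_mx2.
by congr block_mx; apply/matrixP => i j; rewrite !mxE;
  case: (val i == 0%N); case: (val j == 0%N); ring.
Qed.

Lemma det_Qp_compression :
  \det (block_mx (mx2 ('X - (N%:R + a)%:P) 0 1 ('X - a%:P))
                 (mx2 0 0 p%:P a%:P) (mx2 0 0 p%:P a%:P) ('X - a%:P)%:M) =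
  'X * ('X - a%:P) * ('X - (2%:R * N%:R * p)%:P) * ('X - (N%:R + a)%:P).
Proof.
have Xa_neq0 : ('X - a%:P) ^+ 2 != 0 by rewrite expf_neq0 // polyXsubC_eq0.
apply: (mulIf Xa_neq0); rewrite det_block_mx_scalar scale_mx2 mul_mx2 opp_mx2.
rewrite add_mx2 det_mx2; ring.
Qed.

Lemma char_poly_Qp_factor :
  char_poly (@Qp R N p) =
  ('X - (1 + a)%:P) ^+ n * ('X - (N%:R - 1 + a)%:P) ^+ n *
  ('X * ('X - a%:P) * ('X - (2%:R * N%:R * p)%:P) * ('X - (N%:R + a)%:P)).
Proof.
set d1 := 'X - (1 + a)%:P; set d2 := 'X - (N%:R - 1 + a)%:P.
have intertwine : block_mx d1%:M 0 0 d2%:M *m frame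
                  = frame *m block_mx d1%:M 0 0 d2%:M.
  rewrite /Qp_frame map_block_mx !map_mx0 !mulmx_block.
  by rewrite !(mulmx0, mul0mx, addr0, add0r) !mul_scalar_mx !mul_mx_scalar.
have := det_sub_mulmx_intertwined (core *m frame^T) intertwine.
rewrite mulmxA -char_poly_mx_Qp_decomp -/(char_poly _) Qp_compression.
rewrite det_Qp_compression !det_ublock !det_scalar => char_eq.
have d12_neq0 : d1 ^+ 2 * d2 ^+ 2 != 0.
  by rewrite mulf_neq0 // expf_neq0 // polyXsubC_eq0.
apply: (mulIf d12_neq0); rewrite char_eq -[N]addn2 !exprD; ring.
Qed.

End CharPoly.

Definition Qp_spectrum (R : pzRingType) (n : nat) (p : R) : seq R :=
  [:: 0; n%:R * p; 2%:R * n%:R * p; n%:R + n%:R * p]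
  ++ nseq n.-2 (1 + n%:R * p) ++ nseq n.-2 (n%:R - 1 + n%:R * p).

Lemma char_poly_Qp (R : fieldType) n (p : R) : (1 < n)%N ->
  char_poly (@Qp R n p) = \prod_(x <- Qp_spectrum n p) ('X - x%:P).
Proof.
case: n => [|[|n]] // _; rewrite char_poly_Qp_factor /Qp_spectrum.
by rewrite !big_cat !big_cons big_nil !prodr_nseq /= subr0; ring.
Qed.

Lemma sorted_Qp_spectrum_nth (R : realFieldType) n (p : R) s :
  (2 < n)%N -> 0 < p -> sorted <=%R s -> perm_eq s (Qp_spectrum n p) ->
  s`_1 = n%:R * p /\ s`_2 = Num.min (2%:R * n%:R * p) (1 + n%:R * p).
Proof.
move=> n_gt2 p_gt0 s_sorted; rewrite -mulrA.
have n_ge3 : 3 <= n%:R :> R by rewrite (ler_nat R 3).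
set a := n%:R * p; have a_gt0 : 0 < a by rewrite mulr_gt0 //; lra.
have [k n2] : exists k, n.-2 = k.+1.
  by exists n.-2.-1; rewrite prednK // -subn2 subn_gt0.
pose rest := nseq k (1 + a) ++ nseq k.+1 (n%:R - 1 + a).
have rest_ge : all (>= (1 + a))%O rest.
  have le_n1 : 1 + a <= n%:R - 1 + a by rewrite lerD2r; lra.
  by rewrite all_cat !all_nseq lexx le_n1 !orbT.
have -> : Qp_spectrum n p = [:: 0, a, 2%:R * a, n%:R + a, 1 + a & rest].
  by rewrite /Qp_spectrum -mulrA n2.
move=> s_perm; have [le_a1|lt1a] := lerP a 1.
  rewrite min_l; last by lra.
  suff -> : s = [:: 0; a; 2%:R * a] ++ sort <=%O [:: n%:R + a, 1 + a & rest].
    by [].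
  apply: sorted_perm_cat => //=; first by lra.
  apply: (allrel_le_pivot (b := 2%:R * a)); first by rewrite /=; lra.
  rewrite /= (sub_all _ rest_ge); first by lra.
  by move=> x /=; apply: le_trans; lra.
rewrite min_r; last by lra.
suff -> : s = [:: 0; a; 1 + a] ++ sort <=%O [:: 2%:R * a, n%:R + a & rest].
  by [].
apply: sorted_perm_cat => //=.
- by apply: (perm_trans s_perm); rewrite /= !perm_cons (perm_catCA [:: _; _] [:: _]).
- by lra.
- apply: (allrel_le_pivot (b := 1 + a)); first by rewrite /=; lra.
  by rewrite /= rest_ge; lra.
Qed.

Theorem mainTheorem7 (R : rcfType) (n : nat) (hn : (3 <= n)%N) (p : R)
    (hp : 0 < p) (s : seq R) (hs : asc_eigenvalues (@Qp R n p) s) :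
  s`_1 != 2%:R * n%:R * p /\
  (s`_2 = 2%:R * n%:R * p <-> p <= n%:R^-1).
Proof.
case: hs => _ s_sorted s_char.
have s_perm : perm_eq s (Qp_spectrum n p).
  by apply: prod_XsubC_eq; rewrite -s_char char_poly_Qp // ltnW.
have [-> ->] := sorted_Qp_spectrum_nth hn hp s_sorted s_perm.
have n_gt0 : 0 < n%:R :> R by rewrite ltr0n (leq_trans _ hn).
rewrite -mulrA -[n%:R^-1]div1r ler_pdivlMr // [p * _]mulrC.
have a_gt0 : 0 < n%:R * p by rewrite mulr_gt0.
split; first by lra.
by split => [/min_idPl | le_a1]; [lra | apply/min_idPl; lra].
Qed.
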